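(* Let $n\in\mathbb N$, let $\mathcal H$ be a Hilbert space, and let $\phi:M_n(\mathbb C)\to B(\mathcal H)$ be a positive linear map. Then the restriction $\phi_0$ of $\phi$ to the operator system $C(S^1)^{(n)}$ of $n\times n$ Toeplitz matrices is completely positive, i.e. for every $p\in\mathbb N$ and every positive semidefinite $p\times p$ block matrix $[x_{ij}]$ with all $x_{ij}\in C(S^1)^{(n)}$, the operator matrix $[\phi(x_{ij})]$ is positive on $\mathcal H^p$.
   Context: $C(S^1)^{(n)}\subseteq M_n(\mathbb C)$ denotes the set of complex Toeplitz matrices $[\tau_{k-\ell}]_{k,\ell=0}^{n-1}$. A linear map is positive if it maps positive semidefinite matrices to positive operators. *)

From HB Require Import structures.
From mathcomp Require Import all_boot all_order all_algebra.
From mathcomp Require Import reals complex.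
Set Implicit Arguments. Unset Strict Implicit. Unset Printing Implicit Defensive.
Import Order.TTheory GRing.Theory Num.Theory.
Local Open Scope ring_scope.

Definition psd_kernel (R : realType) (I : finType) (A : I -> I -> R[i]) : Prop :=
  (forall i j, A j i = (A i j)^*) /\
  (forall v : I -> R[i], 0 <= \sum_i \sum_j (v i)^* * A i j * v j).

Definition psd_mx (R : realType) (m : nat) (A : 'M[R[i]]_m) : Prop :=
  psd_kernel (fun i j : 'I_m => A i j).

(* The p x p block matrix [x_ij] with n x n blocks, viewed as a kernel on
   'I_p * 'I_n (this is the (p n) x (p n) matrix up to reindexing). *)
Definition block_psd (R : realType) (p n : nat) (X : 'I_p -> 'I_p -> 'M[R[i]]_n) : Prop :=
  psd_kernel (fun a b : 'I_p * 'I_n => X a.1 b.1 a.2 b.2).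

Definition toeplitz (R : realType) (n : nat) (A : 'M[R[i]]_n) : Prop :=
  exists tau : int -> R[i], forall k l : 'I_n, A k l = tau (k%:Z - l%:Z).

Definition is_hilbert (R : realType) (V : lmodType R[i]) (ip : V -> V -> R[i]) : Prop :=
  [/\ (forall (a : R[i]) (x y z : V), ip (a *: x + y) z = a * ip x z + ip y z),
      (forall x y : V, ip y x = (ip x y)^*),
      (forall x : V, 0 <= ip x x),
      (forall x : V, ip x x = 0 -> x = 0) &
      (forall u : nat -> V,
         (forall eps : R[i], 0 < eps -> exists N : nat, forall m k : nat,
             (N <= m)%N -> (N <= k)%N -> ip (u m - u k) (u m - u k) < eps) ->
         exists l : V, forall eps : R[i], 0 < eps -> exists N : nat, forall m : nat,
             (N <= m)%N -> ip (u m - l) (u m - l) < eps)].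

Definition bounded_op (R : realType) (V : lmodType R[i]) (ip : V -> V -> R[i])
    (T : V -> V) : Prop :=
  (forall (a : R[i]) (x y : V), T (a *: x + y) = a *: T x + T y) /\
  (exists M : R[i], forall x : V, ip (T x) (T x) <= M * ip x x).

Definition pos_op (R : realType) (V : lmodType R[i]) (ip : V -> V -> R[i])
    (T : V -> V) : Prop :=
  forall h : V, 0 <= ip (T h) h.

Definition linear_to_BH (R : realType) (n : nat) (V : lmodType R[i])
    (ip : V -> V -> R[i]) (phi : 'M[R[i]]_n -> V -> V) : Prop :=
  (forall (a : R[i]) (A B : 'M[R[i]]_n) (h : V),
      phi (a *: A + B) h = a *: phi A h + phi B h) /\
  (forall A, bounded_op ip (phi A)).

Definition positive_map (R : realType) (n : nat) (V : lmodType R[i])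
    (ip : V -> V -> R[i]) (phi : 'M[R[i]]_n -> V -> V) : Prop :=
  forall A, psd_mx A -> pos_op ip (phi A).

From HB Require Import structures.
From mathcomp Require Import all_boot all_order all_algebra.
From mathcomp Require Import reals complex.
From mathcomp Require Import sesquilinear spectral ring.
Set Implicit Arguments. Unset Strict Implicit. Unset Printing Implicit Defensive.
Import Order.TTheory GRing.Theory Num.Theory.
Local Open Scope ring_scope.

(* For e > 0 the kernel ((a,k),(b,l)) |-> x_ab(k,l) + e [a = b][k = l] is
   positive definite and, each x_ab being Toeplitz, invariant under the shift
   (a,k) |-> (a,k+1).  Writing it as the Gram matrix of vectors w_(a,k), the
   shift is isometric on the span of the w_(a,k) with k < n - 1, hence extends
   to a partial isometry, whose unitary dilation U satisfies
   w_(a,k) = U^k w_(a,0).  Diagonalising U gives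
     x_ab + e [a = b] 1 = \sum_r conj(y_ar) y_br [conj(lam_r)^k lam_r^l]_(k,l),
   a combination of positive rank-one matrices, so that
     \sum_ab <phi(x_ab) h_b, h_a> + e \sum_a <phi(1) h_a, h_a>
       = \sum_r <phi(P_r) g_r, g_r> >= 0,   g_r = \sum_b y_br h_b,
   and e -> 0 concludes. *)

Section GramShift.
Variable C : numClosedFieldType.
Local Open Scope sesquilinear_scope.

Lemma adjmxM m n p (A : 'M[C]_(m, n)) (B : 'M[C]_(n, p)) :
  (A *m B)^t* = B^t* *m A^t*.
Proof. by rewrite trmx_mul map_mxM. Qed.

Lemma adjmxD m n (A B : 'M[C]_(m, n)) : (A + B)^t* = A^t* + B^t*.
Proof. by rewrite linearD map_mxD. Qed.

Lemma adjmxB m n (A B : 'M[C]_(m, n)) : (A - B)^t* = A^t* - B^t*.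
Proof. by rewrite linearB map_mxB. Qed.

Lemma adjmx1 n : (1%:M : 'M[C]_n)^t* = 1%:M.
Proof. by rewrite trmx1 map_mx1. Qed.

Lemma adjmx_sum m n I (r : seq I) (P : pred I) (F : I -> 'M[C]_(m, n)) :
  (\sum_(i <- r | P i) F i)^t* = \sum_(i <- r | P i) (F i)^t*.
Proof. by rewrite linear_sum raddf_sum. Qed.

Lemma adjmx_delta m n (i : 'I_m) (j : 'I_n) :
  (delta_mx i j : 'M[C]_(m, n))^t* = delta_mx j i.
Proof. by rewrite trmx_delta map_delta_mx. Qed.

Lemma adjmx_mul_ge0 n (v : 'cV[C]_n) : 0 <= (v^t* *m v) 0 0.
Proof. by rewrite -[v in _ *m v]trmxCK -dotmxE dnorm_ge0. Qed.

Lemma adjmx_mul_eq0 n (v : 'cV[C]_n) : ((v^t* *m v) 0 0 == 0) = (v == 0).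
Proof.
rewrite -[v in _ *m v]trmxCK -dotmxE dnorm_eq0.
apply/eqP/eqP => [v0|->]; last by rewrite trmx0 map_mx0.
by rewrite -[v]trmxCK v0 trmx0 map_mx0.
Qed.

Definition posdefmx n (G : 'M[C]_n) : Prop :=
  forall v : 'cV_n, v != 0 -> 0 < (v^t* *m G *m v) 0 0.

Lemma posdefmx_form_ge0 n (G : 'M[C]_n) (v : 'cV_n) :
  posdefmx G -> 0 <= (v^t* *m G *m v) 0 0.
Proof.
move=> Gpd; have [->|v0] := eqVneq v 0; first by rewrite mulmx0 mxE.
exact: ltW (Gpd v v0).
Qed.

Lemma unitarymx_normal n (U : 'M[C]_n) : U \is unitarymx -> U \is normalmx.
Proof. by move=> /unitarymxP UU; apply/normalmxP; rewrite UU (mulmx1C UU). Qed.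

Lemma partial_isometry_dilation n (K : 'M[C]_n) : K *m K^t* *m K = K ->
  block_mx K (1%:M - K *m K^t*) (1%:M - K^t* *m K) (K^t*) \is unitarymx.
Proof.
move=> KKK; set Q := K *m K^t*; set P := K^t* *m K.
have Qh : Q^t* = Q by rewrite adjmxM trmxCK.
have Ph : P^t* = P by rewrite adjmxM trmxCK.
have QK : Q *m K = K := KKK.
have KtQ : K^t* *m Q = K^t* by rewrite -Qh -adjmxM QK.
have KP : K *m P = K by rewrite mulmxA.
have QQ : Q *m Q = Q by rewrite mulmxA QK.
have PP : P *m P = P by rewrite -mulmxA KP.
have PKt : P *m K^t* = K^t* by rewrite -mulmxA KtQ.
have Uh : (block_mx K (1%:M - Q) (1%:M - P) (K^t*))^t* =
          block_mx (K^t*) (1%:M - P) (1%:M - Q) K.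
  by rewrite tr_block_mx map_block_mx !adjmxB adjmx1 Qh Ph trmxCK.
apply/unitarymxP; rewrite Uh mulmx_block scalar_mx_block.
rewrite !mulmxBl !mulmxBr !mul1mx !mulmx1 -/Q -/P QQ PP QK KP PKt KtQ.
by rewrite !subrr !subr0 !addr0 subrK addrC subrK.
Qed.

Lemma mul_delta_mx_delta m n p q (i : 'I_m) (a : 'I_n) (M : 'M[C]_(n, p))
    (b : 'I_p) (j : 'I_q) :
  delta_mx i a *m M *m delta_mx b j = M a b *: delta_mx i j.
Proof.
apply/matrixP => x y; rewrite !mxE (bigD1 b) //= big1 ?addr0 => [|k /negPf kb].
  rewrite !mxE (bigD1 a) //= big1 ?addr0 => [|l /negPf la]; last first.
    by rewrite mxE la andbF mul0r.
  by rewrite !mxE !eqxx !andbT /= -mulnb natrM mulrCA mulrA.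
by rewrite [delta_mx b j k y]mxE kb mulr0.
Qed.

Lemma psdmx_gram n (G : 'M[C]_n) : G^t* = G ->
  (forall v : 'cV_n, 0 <= (v^t* *m G *m v) 0 0) ->
  exists B : 'M_n, B^t* *m B = G.
Proof.
move=> Gh Gpsd; have /orthomx_spectralP GE : G \is normalmx.
  by apply/normalmxP; rewrite Gh.
set P := spectralmx G in GE; set mu := spectral_diag G in GE.
have Pu : P \is unitarymx := spectral_unitarymx G.
rewrite invmx_unitary // in GE.
have PPt : P *m P^t* = 1%:M by apply/unitarymxP.
have mu_ge0 j : 0 <= mu 0 j.
  have := Gpsd (P^t* *m delta_mx j 0).
  rewrite adjmxM adjmx_delta trmxCK GE !mulmxA !mulmxtVK //.
  by rewrite mul_delta_mx_delta !mxE eqxx mulr1.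
exists (diag_mx (map_mx sqrtC mu) *m P).
rewrite adjmxM mulmxA -(mulmxA (P^t*)) tr_diag_mx map_diag_mx mulmx_diag GE.
congr (_ *m diag_mx _ *m _); apply/rowP => j; rewrite !mxE.
by rewrite /= geC0_conj ?sqrtC_ge0 // -expr2 sqrtCK.
Qed.

(* [H] inverts the compression [D G D] on the range of the projection [D]; it
   is read off from the inverse of the positive definite [D G D + (1 - D)]. *)
Lemma compression_inverse n (G D : 'M[C]_n) :
  G^t* = G -> posdefmx G -> D^t* = D -> D *m D = D ->
  exists H : 'M_n, [/\ H^t* = H, D *m H = H, H *m D = H & H *m G *m D = D].
Proof.
move=> Gh Gpd Dh DD.
pose E := 1%:M - D.
have Eh : E^t* = E by rewrite adjmxB adjmx1 Dh.
have EE : E *m E = E.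
  by rewrite /E mulmxBl !mulmxBr !mul1mx mulmx1 DD subrr subr0.
pose A := D *m G *m D + E.
have Ah : A^t* = A by rewrite adjmxD !adjmxM Dh Gh Eh mulmxA.
have Aunit : A \in unitmx.
  rewrite unitmxE unitfE; apply/negP => /det0P [v v0 vA].
  have Aw : A *m v^t* = 0 by rewrite -Ah -adjmxM vA trmx0 map_mx0.
  have : (v *m (A *m v^t*)) 0 0 = 0 by rewrite Aw mulmx0 mxE.
  have -> : v *m (A *m v^t*) = (v *m D)^t*^t* *m G *m (v *m D)^t* +
                               (v *m E)^t*^t* *m (v *m E)^t*.
    by rewrite !trmxCK !adjmxM Dh Eh mulmxDl mulmxDr !mulmxA -(mulmxA v E E) EE.
  move/eqP; rewrite mxE paddr_eq0 ?posdefmx_form_ge0 ?adjmx_mul_ge0 //.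
  rewrite adjmx_mul_eq0.
  case/andP => vDG /eqP vE0; have /eqP vD0 : (v *m D)^t* == 0.
    by apply: contraLR vDG => /Gpd/gt_eqF->.
  move/eqP: v0; apply; rewrite -[v]mulmx1 -(subrK D 1%:M) mulmxDr -/E.
  by rewrite -[v *m D]trmxCK -[v *m E]trmxCK vD0 vE0 !trmx0 !map_mx0 addr0.
pose H := invmx A *m D.
have AD : A *m D = D *m G *m D.
  by rewrite mulmxDl mulmxBl mul1mx DD subrr addr0 -mulmxA DD.
have DA : D *m A = D *m G *m D.
  by rewrite mulmxDr mulmxBr mulmx1 DD subrr addr0 !mulmxA DD.
have AiD : invmx A *m D = D *m invmx A.
  have := congr1 (fun M => invmx A *m M *m invmx A) (etrans AD (esym DA)).
  by rewrite /= !mulmxA mulVmx // mul1mx -!mulmxA mulmxV // mulmx1.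
exists H; split.
- by rewrite /H adjmxM trmx_inv map_invmx Ah Dh AiD.
- by rewrite /H mulmxA -AiD -mulmxA DD.
- by rewrite /H -mulmxA DD.
by rewrite /H -2!mulmxA (mulmxA D) -AD mulKmx.
Qed.

Definition partial_perm_mx n (d : pred 'I_n) (f : 'I_n -> 'I_n) : 'M[C]_n :=
  \sum_(i | d i) delta_mx (f i) i.

Lemma partial_perm_mx_delta n p (d : pred 'I_n) f j (k : 'I_p) : d j ->
  partial_perm_mx d f *m delta_mx j k = delta_mx (f j) k.
Proof.
move=> dj; rewrite mulmx_suml (bigD1 j) //= mul_delta_mx big1 ?addr0 //.
by move=> i /andP[_ ij]; rewrite mul_delta_mx_0.
Qed.

Lemma partial_perm_mx_gram n (d : pred 'I_n) f g (G : 'M[C]_n) :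
  (partial_perm_mx d f)^t* *m G *m partial_perm_mx d g =
  \sum_(i | d i) \sum_(j | d j) G (f i) (g j) *: delta_mx i j.
Proof.
rewrite adjmx_sum !mulmx_suml; apply: eq_bigr => i _.
rewrite adjmx_delta mulmx_sumr; apply: eq_bigr => j _.
exact: mul_delta_mx_delta.
Qed.

Lemma gram_shift_partial_isometry n (B G : 'M[C]_n) (d : pred 'I_n) s :
  B^t* *m B = G -> posdefmx G ->
  (forall i j, d i -> d j -> G (s i) (s j) = G i j) ->
  exists K : 'M_n, [/\ K *m K^t* *m K = K,
    forall j, d j -> K^t* *m K *m col j B = col j B &
    forall j, d j -> K *m col j B = col (s j) B].
Proof.
move=> BG Gpd Gs; have Gh : G^t* = G by rewrite -BG adjmxM trmxCK.
pose D := partial_perm_mx d id; pose T := partial_perm_mx d s.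
have Dh : D^t* = D.
  by rewrite adjmx_sum; apply: eq_bigr => i _; rewrite adjmx_delta.
have DD : D *m D = D.
  rewrite {1}/D mulmx_sumr; apply: eq_bigr => i di.
  by rewrite partial_perm_mx_delta.
have TGT : T^t* *m G *m T = D *m G *m D.
  rewrite -{1}Dh !partial_perm_mx_gram.
  by apply: eq_bigr => i di; apply: eq_bigr => j dj; rewrite Gs.
have [H [Hh DH HD HGD]] := compression_inverse Gh Gpd Dh DD.
have HGH : H *m G *m H = H by rewrite -{2}DH mulmxA HGD.
have HGe (j : 'I_n) : d j -> H *m G *m delta_mx j (0 : 'I_1) = delta_mx j 0.
  by move=> dj; rewrite -(partial_perm_mx_delta id _ dj) mulmxA HGD.
(* The shift [B e_j |-> B e_(s j)] composed with the orthogonal projection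
   [B H B^*] onto the span of the [B e_j] with [d j]. *)
pose K := B *m T *m H *m B^t*.
have KtK : K^t* *m K = B *m H *m B^t*.
  have -> : K^t* *m K = B *m (H *m (T^t* *m G *m T) *m H) *m B^t*.
    by rewrite !adjmxM trmxCK Hh -BG !mulmxA.
  by rewrite TGT; congr (_ *m _ *m _); rewrite !mulmxA HD -(mulmxA _ D) DH HGH.
exists K; split => [|j dj|j dj]; rewrite ?colE.
- have -> : K *m K^t* *m K = B *m T *m (H *m G *m H) *m B^t*.
    by rewrite -mulmxA KtK -BG !mulmxA.
  by rewrite HGH.
- have -> : K^t* *m K *m (B *m delta_mx j (0 : 'I_1)) =
            B *m (H *m G *m delta_mx j 0).
    by rewrite KtK -BG !mulmxA.
  by rewrite HGe.
have -> : K *m (B *m delta_mx j (0 : 'I_1)) =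
          B *m T *m (H *m G *m delta_mx j 0).
  by rewrite -BG !mulmxA.
by rewrite HGe // -mulmxA partial_perm_mx_delta.
Qed.

Lemma gram_shift_diagonalization n (G : 'M[C]_n) (d : pred 'I_n) s :
  G^t* = G -> posdefmx G -> (forall i j, d i -> d j -> G (s i) (s j) = G i j) ->
  exists m (Z : 'M[C]_(m, n)) (lam : 'rV[C]_m),
    Z^t* *m Z = G /\ forall j, d j -> col (s j) Z = diag_mx lam *m col j Z.
Proof.
move=> Gh Gpd Gs.
have [B BG] := psdmx_gram Gh (fun v => posdefmx_form_ge0 v Gpd).
have [K [KKK KtKB KB]] := gram_shift_partial_isometry BG Gpd Gs.
have /unitarymx_normal/orthomx_spectralP UE := partial_isometry_dilation KKK.
set U := block_mx _ _ _ _ in UE; set P := spectralmx U in UE.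
have Pu : P \is unitarymx := spectral_unitarymx U.
set X := col_mx B (0 : 'M_(n, n)).
have UX j : d j -> U *m col j X = col (s j) X.
  move=> dj; rewrite !col_col_mx !col0 mul_block_col !mulmx0 !addr0.
  by rewrite mulmxBl mul1mx KtKB // subrr KB.
exists (n + n)%N, (P *m X), (spectral_diag U); split => [|j dj].
  rewrite adjmxM mulmxA mulmxKtV // tr_col_mx map_row_mx mul_row_col BG.
  by rewrite trmx0 map_mx0 mul0mx addr0.
rewrite !colE -!mulmxA -!colE -UX // mulmxA {1}UE invmx_unitary //.
by rewrite !mulmxA (unitarymxP Pu) mul1mx.
Qed.

Lemma adjmx_mul_mx_mulE n (M : 'M[C]_n) (v : 'cV_n) :
  (v^t* *m M *m v) 0 0 = \sum_i \sum_j (v i 0)^* * M i j * v j 0.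
Proof.
rewrite mxE; under eq_bigr => j _ do rewrite mxE mulr_suml.
rewrite exchange_big; apply: eq_bigr => i _; apply: eq_bigr => j _.
by rewrite !mxE.
Qed.

Definition posdef_kernel (I : finType) (G : I -> I -> C) : Prop :=
  (forall i j, G j i = (G i j)^*) /\
  (forall v : I -> C, (exists i, v i != 0) ->
     0 < \sum_i \sum_j (v i)^* * G i j * v j).

Lemma kernel_shift_diagonalization (I : finType) (G : I -> I -> C)
    (d : pred I) (s : I -> I) :
  posdef_kernel G -> (forall i j, d i -> d j -> G (s i) (s j) = G i j) ->
  exists m (z : I -> 'I_m -> C) (lam : 'I_m -> C),
    (forall i j, G i j = \sum_r (z i r)^* * z j r) /\
    (forall i r, d i -> z (s i) r = lam r * z i r).
Proof.
move=> [Gh Gpd] Gs.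
pose M : 'M[C]_#|I| := \matrix_(k, l) G (enum_val k) (enum_val l).
have reindex_enum (F : 'I_#|I| -> C) : \sum_k F k = \sum_i F (enum_rank i).
  by rewrite (reindex (@enum_rank I)) //; apply: onW_bij; exact: enum_rank_bij.
have [|||m [Z [lam [ZZ Zs]]]] := @gram_shift_diagonalization _ M
    (fun k => d (enum_val k)) (fun k => enum_rank (s (enum_val k))).
- by apply/matrixP => k l; rewrite !mxE Gh conjCK.
- move=> v v0; rewrite adjmx_mul_mx_mulE reindex_enum.
  under eq_bigr do rewrite reindex_enum.
  under eq_bigr do under eq_bigr do rewrite mxE !enum_rankK.
  apply: Gpd; apply/existsP; apply: contraNT v0 => /existsPn v0.
  apply/eqP/colP => k; rewrite mxE.
  by have /negPn/eqP := v0 (enum_val k); rewrite enum_valK.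
- by move=> k l dk dl; rewrite !mxE !enum_rankK Gs.
exists m, (fun i r => Z r (enum_rank i)), (fun r => lam 0 r); split.
  move=> i j; have /matrixP/(_ (enum_rank i) (enum_rank j)) := ZZ.
  rewrite !mxE !enum_rankK => <-; apply: eq_bigr => r _; by rewrite !mxE.
move=> i r di; have := Zs (enum_rank i).
rewrite enum_rankK => /(_ di)/matrixP/(_ r 0).
by rewrite mul_diag_mx !mxE.
Qed.

Lemma block_toeplitz_kernel_decomposition p n
    (G : 'I_p * 'I_n -> 'I_p * 'I_n -> C) :
  posdef_kernel G ->
  (forall a b (k l k' l' : 'I_n), k' = k.+1 :> nat -> l' = l.+1 :> nat ->
     G (a, k') (b, l') = G (a, k) (b, l)) ->
  exists m (y : 'I_p -> 'I_m -> C) (lam : 'I_m -> C), forall a b (k l : 'I_n),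
    G (a, k) (b, l) = \sum_r (lam r ^+ k * y a r)^* * (lam r ^+ l * y b r).
Proof.
case: n G => [|n] G Gpd Gsh.
  by exists 0, (fun _ _ => 0), (fun _ => 0) => ? ? [].
pose s (x : 'I_p * 'I_n.+1) := (x.1, inord x.2.+1 : 'I_n.+1).
have [|m [z [lam [Gz zs]]]] := kernel_shift_diagonalization
  (d := fun x : 'I_p * 'I_n.+1 => (x.2.+1 < n.+1)%N) (s := s) Gpd.
  by move=> [a k] [b l] /= kn ln; rewrite /s /=; apply: Gsh; rewrite inordK.
have zk a (k : 'I_n.+1) r : z (a, k) r = lam r ^+ k * z (a, ord0) r.
  case: k => k; elim: k => [|k IHk] kn.
    by rewrite mul1r; congr (z (a, _) r); apply: val_inj.
  have -> : (a, Ordinal kn) = s (a, Ordinal (ltnW kn)).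
    by congr pair; apply: val_inj; rewrite /= inordK.
  by rewrite zs // IHk exprS mulrA.
exists m, (fun a r => z (a, ord0) r), lam => a b k l.
by rewrite Gz; apply: eq_bigr => r _; rewrite (zk a k) (zk b l).
Qed.

End GramShift.

Lemma linear_law_sumZ (K : pzRingType) (W Y : lmodType K) (F : W -> Y) :
  (forall a x y, F (a *: x + y) = a *: F x + F y) ->
  forall I (r : seq I) (c : I -> K) (x : I -> W),
    F (\sum_(i <- r) c i *: x i) = \sum_(i <- r) c i *: F (x i).
Proof.
move=> FL I r c x; have F0 : F 0 = 0.
  apply: (@addrI _ (F 0)).
  by rewrite addr0 -{1}(scale1r (F 0)) -FL scale1r addr0.
by elim/big_rec2: _ => [|i y1 y2 _ <-]; rewrite ?F0 ?FL.
Qed.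

Section BlockForm.
Variables (R : realType) (n : nat) (V : lmodType R[i]).
Variables (ip : V -> V -> R[i]) (phi : 'M[R[i]]_n -> V -> V).
Hypothesis ipL : forall (a : R[i]) (x y z : V),
  ip (a *: x + y) z = a * ip x z + ip y z.
Hypothesis ipC : forall x y : V, ip y x = (ip x y)^*.
Hypothesis phiL : forall (a : R[i]) (A B : 'M[R[i]]_n) (h : V),
  phi (a *: A + B) h = a *: phi A h + phi B h.
Hypothesis phi_lin : forall A (a : R[i]) (x y : V),
  phi A (a *: x + y) = a *: phi A x + phi A y.

Lemma ip_sumZl I (r : seq I) (c : I -> R[i]) (x : I -> V) z :
  ip (\sum_(i <- r) c i *: x i) z = \sum_(i <- r) c i * ip (x i) z.
Proof. exact: (@linear_law_sumZ _ _ R[i]^o _ (fun a x y => ipL a x y z)). Qed.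

Lemma ip_sumZr I (r : seq I) (c : I -> R[i]) (x : I -> V) z :
  ip z (\sum_(i <- r) c i *: x i) = \sum_(i <- r) (c i)^* * ip z (x i).
Proof.
rewrite ipC ip_sumZl rmorph_sum; apply: eq_bigr => i _.
by rewrite rmorphM /= -ipC.
Qed.

Lemma phi_sumZl I (r : seq I) (c : I -> R[i]) (A : I -> 'M[R[i]]_n) h :
  phi (\sum_(i <- r) c i *: A i) h = \sum_(i <- r) c i *: phi (A i) h.
Proof.
exact: (@linear_law_sumZ _ _ _ (phi^~ h) (fun a A B => phiL a A B h)).
Qed.

Lemma phi_sumZr A I (r : seq I) (c : I -> R[i]) (x : I -> V) :
  phi A (\sum_(i <- r) c i *: x i) = \sum_(i <- r) c i *: phi A (x i).
Proof. exact: (@linear_law_sumZ _ _ _ (phi A) (phi_lin A)). Qed.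

Definition block_form p (X : 'I_p -> 'I_p -> 'M[R[i]]_n) (h : 'I_p -> V) :
    R[i] :=
  \sum_a \sum_b ip (phi (X a b) (h b)) (h a).

Lemma block_form_add_scalar p (X : 'I_p -> 'I_p -> 'M[R[i]]_n) (c : R[i]) h :
  block_form (fun a b => X a b + (c * (a == b)%:R) *: 1%:M) h =
  block_form X h + c * \sum_a ip (phi 1%:M (h a)) (h a).
Proof.
rewrite /block_form mulr_sumr -big_split; apply: eq_bigr => a _ /=.
under eq_bigr do rewrite addrC phiL ipL.
rewrite big_split addrC; congr (_ + _).
rewrite (bigD1 a) //= eqxx mulr1 big1 ?addr0 // => b /negPf ba.
by rewrite eq_sym ba mulr0 mul0r.
Qed.

Lemma block_form_rank_one_sum p m (X : 'I_p -> 'I_p -> 'M[R[i]]_n)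
    (y : 'I_p -> 'I_m -> R[i]) (P : 'I_m -> 'M[R[i]]_n) h :
  (forall a b, X a b = \sum_r ((y a r)^* * y b r) *: P r) ->
  block_form X h =
  \sum_r ip (phi (P r) (\sum_b y b r *: h b)) (\sum_a y a r *: h a).
Proof.
move=> XE; rewrite /block_form.
under eq_bigr do under eq_bigr do rewrite XE phi_sumZl ip_sumZl.
under [RHS]eq_bigr do rewrite phi_sumZr ip_sumZl.
under [RHS]eq_bigr do under eq_bigr do rewrite ip_sumZr mulr_sumr.
rewrite [LHS]exchange_big; under eq_bigr do rewrite exchange_big.
rewrite [LHS]exchange_big; apply: eq_bigr => r _; apply: eq_bigr => b _.
by apply: eq_bigr => a _; rewrite -mulrA mulrCA.
Qed.

End BlockForm.

Lemma psd_mx1 (R : realType) n : psd_mx (1%:M : 'M[R[i]]_n).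
Proof.
split=> [k l|v]; first by rewrite !mxE eq_sym rmorph_nat.
apply: sumr_ge0 => k _; rewrite (bigD1 k) //= big1 ?addr0 => [|l /negPf kl].
  by rewrite mxE eqxx mulr1 mulrC mul_conjC_ge0.
by rewrite mxE eq_sym kl mulr0 mul0r.
Qed.

Definition pow_outer_mx (R : realType) n (lam : R[i]) : 'M[R[i]]_n :=
  \matrix_(k, l) (lam^* ^+ k * lam ^+ l).

Lemma psd_pow_outer_mx (R : realType) n (lam : R[i]) :
  psd_mx (pow_outer_mx n lam).
Proof.
split=> [k l|v]; first by rewrite !mxE rmorphM !rmorphXn /= conjCK mulrC.
have -> : \sum_k \sum_l (v k)^* * pow_outer_mx n lam k l * v l =
          (\sum_(k < n) lam ^+ k * v k)^* * (\sum_(l < n) lam ^+ l * v l).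
  rewrite rmorph_sum mulr_suml; apply: eq_bigr => k _.
  rewrite mulr_sumr; apply: eq_bigr => l _.
  by rewrite mxE rmorphM rmorphXn; ring.
by rewrite mulrC mul_conjC_ge0.
Qed.

Lemma toeplitz_shift (R : realType) n (A : 'M[R[i]]_n) : toeplitz A ->
  forall k l k' l' : 'I_n,
    k' = k.+1 :> nat -> l' = l.+1 :> nat -> A k' l' = A k l.
Proof.
case=> tau Atau k l k' l' ek el.
by rewrite !Atau ek el !intS opprD addrACA subrr add0r.
Qed.

Lemma psd_kernel_add_eps_posdef (R : realType) (I : finType)
    (G : I -> I -> R[i]) (e : R[i]) :
  psd_kernel G -> 0 < e -> posdef_kernel (fun x y => G x y + e * (x == y)%:R).
Proof.
move=> [Gh Gpsd] e_gt0; split => [x y|v [x vx]].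
  by rewrite rmorphD rmorphM /= rmorph_nat Gh (geC0_conj (ltW e_gt0)) eq_sym.
have -> : \sum_x \sum_y (v x)^* * (G x y + e * (x == y)%:R) * v y =
    \sum_x \sum_y (v x)^* * G x y * v y + e * \sum_x (v x)^* * v x.
  rewrite mulr_sumr -big_split; apply: eq_bigr => x' _ /=.
  under eq_bigr do rewrite mulrDr mulrDl.
  rewrite big_split; congr (_ + _).
  rewrite (bigD1 x') //= eqxx big1 ?addr0 => [|y /negPf yx].
    by rewrite mulr1 -mulrA mulrCA.
  by rewrite eq_sym yx mulr0 mulr0 mul0r.
rewrite ltr_wpDl ?Gpsd // mulr_gt0 // (bigD1 x) //= ltr_wpDr ?sumr_ge0 //.
  by move=> y _; rewrite mulrC mul_conjC_ge0.
by rewrite mulrC mul_conjC_gt0.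
Qed.

Lemma ge0_of_addeps (F : numFieldType) (t c : F) :
  0 <= c -> (forall e, 0 < e -> 0 <= t + e * c) -> 0 <= t.
Proof.
move=> c_ge0 tec; have c1_gt0 : 0 < c + 1 by rewrite ltr_wpDl.
have t_real : t \is Num.real.
  have := tec 1 ltr01; rewrite mul1r => tc_ge0.
  by rewrite -(addrK c t) rpredB ?ger0_real.
rewrite real_leNgt ?real0 //; apply/negP => t_lt0.
have e_gt0 : 0 < - t / (c + 1) by rewrite divr_gt0 // oppr_gt0.
have := tec _ e_gt0.
have -> : t + - t / (c + 1) * c = t / (c + 1) by field; rewrite gt_eqF.
by rewrite pmulr_lge0 ?invr_gt0 // => /(lt_le_trans t_lt0); rewrite ltxx.
Qed.

Theorem theorem5p1 (R : realType) (n : nat) (V : lmodType R[i])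
    (ip : V -> V -> R[i]) (phi : 'M[R[i]]_n -> V -> V) :
  is_hilbert ip -> linear_to_BH ip phi -> positive_map ip phi ->
  forall (p : nat) (X : 'I_p -> 'I_p -> 'M[R[i]]_n),
    (forall a b, toeplitz (X a b)) ->
    block_psd X ->
    forall h : 'I_p -> V,
      0 <= \sum_(a < p) \sum_(b < p) ip (phi (X a b) (h b)) (h a).
Proof.
move=> [ipL ipC _ _ _] [phiL phiB] phipos p X Xt Xpsd h.
have phi_lin A := (phiB A).1.
change (0 <= block_form ip phi X h).
have c_ge0 : 0 <= \sum_a ip (phi 1%:M (h a)) (h a).
  by apply: sumr_ge0 => a _; apply: phipos; exact: psd_mx1.
apply: (ge0_of_addeps c_ge0) => e e_gt0.
have [|m [y [lam Ge]]] :=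
  block_toeplitz_kernel_decomposition (psd_kernel_add_eps_posdef Xpsd e_gt0).
  move=> a b k l k' l' ek el /=.
  rewrite (toeplitz_shift (Xt a b) ek el) !xpair_eqE.
  by rewrite -[k' == l']val_eqE /= ek el eqSS val_eqE.
rewrite -(block_form_add_scalar ipL phiL).
rewrite (block_form_rank_one_sum ipL ipC phiL phi_lin
  (P := fun r => pow_outer_mx n (lam r)) (y := y)).
  by apply: sumr_ge0 => r _; apply: phipos; exact: psd_pow_outer_mx.
move=> a b; apply/matrixP => k l.
rewrite !mxE summxE -mulrA -natrM mulnb -xpair_eqE [LHS]Ge.
by apply: eq_bigr => r _; rewrite !mxE rmorphM rmorphXn /= mulrACA mulrC.
Qed.
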